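(* Consider the single-block on-chain auction game described in the context with $n=1$ (so $N=\{0,1\}$) and reserve price $r=0$, where $F_0$ has density $f_0$ and $F_0(x)/f_0(x)$ is non-decreasing in $x$. Then the following strategy profile constitutes an equilibrium: (i) Bidder 1 bids truthfully, $b_1=v_1$, and tips $t_1(v_1)$, where $t_1(v_1)$ is the value of $t$ solving $(v_1-t)-\frac{F_0(t)}{f_0(t)}=0$. (ii) Bidder 0, having observed bidder 1's tip $t_1$ and knowing his value $v_0$, bribes (i.e. offers the proposer a payment of $t_1$ in exchange for excluding bidder 1's bid) if $t_1\le v_0$, and does not bribe if $t_1>v_0$; moreover bidder 0 submits a nonzero bid in the auction if and only if he bribes. (iii) The proposer accepts bidder 0's bribe whenever it is offered and then excludes bidder 1's bid; otherwise the proposer includes both bids.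
   Context: Single-block on-chain auction game. A seller has one indivisible good; there are $n+1$ buyers $N=\{0,1,\dots,n\}$, $n\ge 1$, with quasilinear utilities. Buyer $i$ has a private value $v_i$; $v_0$ is drawn from a distribution with CDF $F_0$ and density $f_0$, and $v_1,\dots,v_n$ are drawn i.i.d. from a distribution with CDF $F$ and density $f$, all independent, with supports equal to $[0,1]$; $n,F,F_0$ are common knowledge. The seller runs a sealed-bid second-price auction with reserve price $r$ in which bids are accepted in a single block built by a single profit-maximizing proposer. Timing: (1) the seller announces the auction; (2) buyers learn their values; (3) buyers $1,\dots,n$ simultaneously submit a private (sealed) bid $b_i$ and a publicly observed tip $t_i\ge 0$; (4) buyer 0 observes the tips $(t_1,\dots,t_n)$ and his value $v_0$, and may make the proposer a take-it-or-leave-it offer consisting of a subset $S\subseteq\{1,\dots,n\}$ and a payment $p$ to exclude the bids in $S$; buyer 0 also submits his own bid $b_0$; (5) the proposer accepts or rejects: if he accepts he includes exactly the bids of $N\setminus S$ and receives $p$, otherwise he includes all bids; the proposer accepts if and only if $p\ge\sum_{i\in S}t_i$; (6) the second-price auction is computed on the included bids: the highest included bid wins if it is at least $r$, paying the maximum of $r$ and the other included bids. A bidder pays his tip to the proposer if and only if his bid is included. ''Bribing'' (when all of $1,\dots,n$ are targeted) means offering $S=\{1,\dots,n\}$ with $p=\sum_{i=1}^n t_i$. Solution concept: perfect Bayesian equilibrium, restricted to profiles in which (a) bidders $1,\dots,n$ bid truthfully ($b_i=v_i$) and use a common tipping function of their value, and (b) bidder 0 bids his value if, given the observed tips, he assigns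 positive probability to winning, and otherwise bids $0$ or does not bid. Such profiles are called equilibria. *)

From HB Require Import structures.
From mathcomp Require Import all_boot all_order all_algebra.
From mathcomp Require Import all_classical all_reals all_analysis.
Set Implicit Arguments. Unset Strict Implicit. Unset Printing Implicit Defensive.
Import Order.TTheory GRing.Theory Num.Theory.
Local Open Scope classical_set_scope.
Local Open Scope ring_scope.

(* An action of bidder 0 (taken after observing bidder 1's tip and v0):
   - [offer] : [None] = no offer to the proposer; [Some (S, p)] = take-it-or-
     leave-it offer of payment [p] to exclude the set S ⊆ {1}, where
     [S = true] means S = {1} and [S = false] means S = ∅;
   - [bid0]  : [None] = bidder 0 does not bid; [Some b] = sealed bid b. *)
Record action0 (R : Type) := Action0 { offer : option (bool * R); bid0 : option R }.

Section Game.
Variable R : realType.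

(* Proposer's rule: accept iff p >= sum of tips of the excluded bids. *)
Definition accepts (t1 : R) (o : option (bool * R)) : bool :=
  match o with
  | None => false
  | Some (s, p) => (if s then t1 else 0) <= p
  end.

Definition payment (t1 : R) (o : option (bool * R)) : R :=
  match o with
  | Some (_, p) => if accepts t1 o then p else 0
  | None => 0
  end.

Definition excluded1 (t1 : R) (o : option (bool * R)) : bool :=
  match o with
  | Some (true, p) => t1 <= p
  | _ => false
  end.

(* Sealed-bid second-price auction with reserve r on the included bids
   c0 (bidder 0) and c1 (bidder 1).  Result: [None] = no sale;
   [Some (w, price)] with w = true iff bidder 1 wins.
   Ties are broken in favour of bidder 1. *)
Definition auction (r : R) (c0 c1 : option R) : option (bool * R) :=
  match c0, c1 with
  | None, None => None
  | Some b0, None => if r <= b0 then Some (false, r) else None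
  | None, Some b1 => if r <= b1 then Some (true, r) else None
  | Some b0, Some b1 =>
      if b0 <= b1 then (if r <= b1 then Some (true, Num.max r b0) else None)
      else (if r <= b0 then Some (false, Num.max r b1) else None)
  end.

(* included bid of bidder 1 (b1 = None: bidder 1 submits no bid) *)
Definition incl1 (b1 : option R) (t1 : R) (a : action0 R) : option R :=
  if excluded1 t1 (offer a) then None else b1.

Definition u1 (r v1 : R) (b1 : option R) (t1 : R) (a : action0 R) : R :=
  let c1 := incl1 b1 t1 a in
  (match auction r (bid0 a) c1 with Some (true, p) => v1 - p | _ => 0 end)
  - (if c1 is Some _ then t1 else 0).

Definition u0 (r v0 : R) (b1 : option R) (t1 : R) (a : action0 R) : R :=
  let c1 := incl1 b1 t1 a in
  (match auction r (bid0 a) c1 with Some (false, p) => v0 - p | _ => 0 end)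
  - payment t1 (offer a).

Definition wins0 (r : R) (b1 : option R) (t1 : R) (a : action0 R) : bool :=
  match auction r (bid0 a) (incl1 b1 t1 a) with
  | Some (false, _) => true
  | _ => false
  end.

Definition EU1 (r : R) (f0 : R -> R) (sigma0 : R -> R -> action0 R)
    (v1 : R) (b1 : option R) (t1 : R) : \bar R :=
  (\int[@lebesgue_measure R]_(x in `[0%R, 1%R])
      ((u1 r v1 b1 t1 (sigma0 t1 x)) * f0 x)%:E)%E.

(* Perfect Bayesian equilibrium (n = 1) restricted to profiles in which bidder 1
   bids truthfully and tips tau(v1), and bidder 0 plays sigma0 (a function of
   the observed tip and of v0); the proposer follows [accepts].
   Bidder 0's beliefs about v1 after observing tip t are given by the point
   belief beta t ∈ [0,1], Bayes-consistent on path (beta (tau v) = v). *)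
Definition equilibrium (r : R) (f0 : R -> R) (tau : R -> R)
    (sigma0 : R -> R -> action0 R) : Prop :=
  (forall v, 0 <= v <= 1 -> 0 <= tau v) /\
  exists beta : R -> R,
    (forall t, 0 <= beta t <= 1) /\
    (forall v, 0 <= v <= 1 -> beta (tau v) = v) /\
    (forall t v0, 0 <= t -> 0 <= v0 <= 1 ->
       let a := sigma0 t v0 in
       if wins0 r (Some (beta t)) t (Action0 (offer a) (Some v0))
       then bid0 a = Some v0
       else (bid0 a = None \/ bid0 a = Some 0)) /\
    (forall t v0, 0 <= t -> 0 <= v0 <= 1 -> forall a : action0 R,
       u0 r v0 (Some (beta t)) t a <= u0 r v0 (Some (beta t)) t (sigma0 t v0)) /\
    (forall v1, 0 <= v1 <= 1 -> forall (b : option R) (t : R), 0 <= t ->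
       (EU1 r f0 sigma0 v1 b t <= EU1 r f0 sigma0 v1 (Some v1) (tau v1))%E).

Definition sigma0_prop1 (t1 v0 : R) : action0 R :=
  if t1 <= v0 then Action0 (Some (true, t1)) (Some v0) else Action0 None None.

Definition cdf_with_density (F f : R -> R) : Prop :=
  measurable_fun setT f /\ (forall x, 0 <= f x) /\
  (forall x, ((F x)%:E = \int[@lebesgue_measure R]_(y in `]-oo, x]) (f y)%:E)%E) /\
  F 0 = 0 /\ F 1 = 1 /\
  (forall a b, 0 <= a -> a < b -> b <= 1 -> F a < F b).

End Game.

From HB Require Import structures.
From mathcomp Require Import all_boot all_order all_algebra.
From mathcomp Require Import all_classical all_reals all_analysis.
From mathcomp Require Import measurable_realfun lra.
Set Implicit Arguments. Unset Strict Implicit. Unset Printing Implicit Defensive.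
Import Order.TTheory GRing.Theory Num.Theory.
Local Open Scope classical_set_scope.
Local Open Scope ring_scope.

(* Under bidder 0's rule a tip t of bidder 1 matters exactly when v0 < t, so a
   bidder 1 of value v who tips s (and bids) earns (v - s) F0 s.  Writing
   F0 s - F0 t as the integral of f0 over ]t, s] and bounding f0 there through
   the monotone hazard F0 / f0 shows that this payoff is maximal where
   v - t = F0 t / f0 t.  Bidder 0 believes that a tip t comes from the type
   t + F0 t / f0 t >= t, so excluding bidder 1 at cost t and winning at price 0
   (or staying out when v0 < t) is a best response. *)

Lemma integral_cst_itv_oc (R : realType) (a b c : R) : a <= b ->
  ((c * (b - a))%:E = \int[@lebesgue_measure R]_(x in `]a, b]) c%:E)%E.
Proof.
move=> ab; have -> := integral_cst (@lebesgue_measure R) (measurable_itv `]a, b]) c%:E.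
rewrite EFinM; congr (_ * _)%E; symmetry.
apply: eq_trans; first exact: (lebesgue_measure_itv `]a, b]).
rewrite /= lte_fin.
case: ltP => [_|ba]; first by rewrite EFinB.
have -> : b = a by apply/eqP; rewrite eq_le ab ba.
by rewrite subrr.
Qed.

Section Density.
Variables (R : realType) (F f : R -> R).
Local Notation mu := (@lebesgue_measure R).
Hypothesis f_ge0 : forall x, 0 <= f x.

Lemma integral_le0_density (D : set R) (g : R -> R) :
  (forall x, g x <= 0) -> (\int[mu]_(x in D) (g x * f x)%:E <= 0)%E.
Proof.
move=> g_le0.
have gf_ge0 x : D x -> (0 <= (- g x * f x)%:E)%E.
  by move=> _; rewrite lee_fin mulr_ge0 // oppr_ge0.
under eq_integral => x _ do rewrite -[g x]opprK mulNr EFinN.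
by rewrite integral_ge0N // oppe_le0 integral_ge0.
Qed.

Hypothesis mf : measurable_fun setT f.
Hypothesis F_def : forall x, ((F x)%:E = \int[mu]_(y in `]-oo, x]) (f y)%:E)%E.

Let mfE (D : set R) : measurable D -> measurable_fun D (EFin \o f).
Proof. by move=> mD; apply/measurable_EFinP; exact: measurable_funS mf. Qed.

Let fE_ge0 (D : set R) x : D x -> (0 <= (f x)%:E)%E.
Proof. by move=> _; rewrite lee_fin. Qed.

Lemma cdf_ge0 x : 0 <= F x.
Proof. by rewrite -lee_fin F_def; apply: integral_ge0; exact: fE_ge0. Qed.

Lemma cdf_itv_oc a b : a <= b ->
  ((F b - F a)%:E = \int[mu]_(y in `]a, b]) (f y)%:E)%E.
Proof.
move=> ab; have := F_def b.
rewrite (@itv_bndbnd_setU _ _ _ (BRight a)) ?bnd_simp // ge0_integral_setU //=.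
- by rewrite -F_def EFinB => ->; rewrite addeAC subee // add0e.
- by apply: mfE; apply: measurableU; exact: measurable_itv.
- exact: fE_ge0.
- apply/disj_setPS => x [] /=; rewrite !in_itv /= => xa /andP[ax _].
  by move: (lt_le_trans ax xa); rewrite ltxx.
Qed.

Lemma cdf_le a b : a <= b -> F a <= F b.
Proof.
by move=> ab; rewrite -subr_ge0 -lee_fin cdf_itv_oc //; apply: integral_ge0; exact: fE_ge0.
Qed.

Lemma cdf_itv_ocZ a b k : a <= b -> 0 <= k ->
  ((k * (F b - F a))%:E = \int[mu]_(x in `]a, b]) (k * f x)%:E)%E.
Proof.
move=> ab k0; rewrite EFinM cdf_itv_oc //.
under [RHS]eq_integral => x _ do rewrite EFinM.
rewrite ge0_integralZl_EFin //; first exact: fE_ge0.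
by apply: mfE; exact: measurable_itv.
Qed.

Lemma cdf_increment_le a b k M : a <= b -> 0 <= k ->
  {in `]a, b], forall x, k * f x <= M} -> k * (F b - F a) <= M * (b - a).
Proof.
move=> ab k0 kfM; rewrite -lee_fin cdf_itv_ocZ // integral_cst_itv_oc //.
apply: ge0_le_integral; first exact: measurable_itv.
- by move=> x _; rewrite lee_fin mulr_ge0.
- apply/measurable_EFinP; apply: measurable_funM => //.
  by apply: measurable_funS mf => //; exact: measurable_itv.
- exact: measurable_cst.
- by move=> x ax; rewrite lee_fin kfM // inE.
Qed.

Lemma cdf_increment_ge a b k m : a <= b -> 0 <= k -> 0 <= m ->
  {in `]a, b], forall x, m <= k * f x} -> m * (b - a) <= k * (F b - F a).
Proof.
move=> ab k0 m0 mkf; rewrite -lee_fin cdf_itv_ocZ // integral_cst_itv_oc //.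
apply: ge0_le_integral; first exact: measurable_itv.
- by move=> x _; rewrite lee_fin.
- exact: measurable_cst.
- apply/measurable_EFinP; apply: measurable_funM => //.
  by apply: measurable_funS mf => //; exact: measurable_itv.
- by move=> x ax; rewrite lee_fin mkf // inE.
Qed.

Hypothesis F_0 : F 0 = 0.

Lemma integral_step_density t c : 0 <= t <= 1 -> 0 <= c ->
  (\int[mu]_(x in `[0%R, 1%R]) ((if x < t then c else 0) * f x)%:E = (c * F t)%:E)%E.
Proof.
move=> /andP[t0 t1] c0.
transitivity (\int[mu]_(x in `[0%R, 1%R]) (((fun x => (c * f x)%:E) \_ `]-oo, t[) x))%E.
  apply: eq_integral => x _; rewrite /patch mem_setE in_itv /=.
  by case: ifP => _; rewrite ?mul0r.
rewrite -integral_mkcondr.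
have -> : `[0%R, 1%R] `&` `]-oo, t[ = `[0%R, t[%classic :> set R.
  apply/seteqP; split => x /=; rewrite !in_itv /=.
    by case=> /andP[x0 _] xt; rewrite x0 xt.
  by case/andP=> x0 xt; rewrite x0 xt (le_trans (ltW xt) t1).
rewrite integral_itv_bndo_bndc -?integral_itv_obnd_cbnd.
- by rewrite -cdf_itv_ocZ // F_0 subr0.
- by apply/measurable_EFinP; apply: measurable_funM => //; exact: measurable_funS mf.
- by apply/measurable_EFinP; apply: measurable_funM => //; exact: measurable_funS mf.
Qed.

Lemma hazard_ge0 x : 0 <= F x / f x.
Proof. by rewrite divr_ge0 ?cdf_ge0. Qed.

Hypothesis f_gt0 : forall x, 0 < x <= 1 -> 0 < f x.
Hypothesis hazard_mono :
  forall x y, 0 <= x -> x <= y -> y <= 1 -> F x / f x <= F y / f y.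

Lemma foc_argmax v t s : 0 <= t <= 1 -> v - t = F t / f t -> 0 <= s <= 1 ->
  (v - s) * F s <= (v - t) * F t.
Proof.
move=> /andP[t0 t1] foc /andP[s0 s1].
have k0 : 0 <= v - t by rewrite foc hazard_ge0.
have [ts|st] := leP t s.
- have hazard_bound : {in `]t, s], forall x, (v - t) * f x <= F s}.
    move=> x; rewrite in_itv /= => /andP[tx xs].
    have fx_gt0 : 0 < f x by apply: f_gt0; apply/andP; split; lra.
    have : v - t <= F x / f x by rewrite foc; apply: hazard_mono; lra.
    rewrite ler_pdivlMr // => /le_trans; apply; exact: cdf_le.
  have := cdf_increment_le ts k0 hazard_bound; nra.
- have hazard_bound : {in `]s, t], forall x, F s <= (v - t) * f x}.
    move=> x; rewrite in_itv /= => /andP[sx xt].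
    have fx_gt0 : 0 < f x by apply: f_gt0; apply/andP; split; lra.
    have : F x / f x <= v - t by rewrite foc; apply: hazard_mono; lra.
    rewrite ler_pdivrMr // => /(le_trans _); apply; apply: cdf_le; lra.
  have := cdf_increment_ge (ltW st) k0 (cdf_ge0 s) hazard_bound; nra.
Qed.

End Density.

Ltac case_ifs := repeat (case: ifP => /=;
  [move=> ? | move/negbT; rewrite -?ltNge -?leNgt => ?]).

Section Play.
Variable R : realType.
Implicit Types (t b x : R) (a : action0 R).

Lemma u0_le_max (v0 : R) b t a : 0 <= t -> 0 <= b ->
  u0 0 v0 (Some b) t a <= Num.max 0 (Num.max (v0 - t) (v0 - b)).
Proof.
move=> t0 b0; set M := Num.max _ _.
have M0 : 0 <= M by rewrite le_max lexx.
have Mt : v0 - t <= M by rewrite !le_max lexx orbT.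
have Mb : v0 - b <= M by rewrite !le_max lexx !orbT.
case: a => [[[[] p]|] [b0'|]];
  rewrite /u0 /incl1 /excluded1 /auction /payment /accepts /=; case_ifs;
  rewrite ?(max_r b0); lra.
Qed.

Lemma u0_sigma0_prop1 (v0 : R) b t : 0 <= v0 -> 0 <= b ->
  u0 0 v0 (Some b) t (sigma0_prop1 t v0) = Num.max 0 (v0 - t).
Proof.
move=> v00 b0; rewrite /sigma0_prop1 /u0 /incl1 /excluded1 /auction /payment /accepts.
case_ifs; rewrite /Num.max; case_ifs; lra.
Qed.

Lemma sigma0_prop1_best_response (v0 : R) b t a : 0 <= t -> 0 <= v0 -> 0 <= b ->
  Num.min t v0 <= b ->
  u0 0 v0 (Some b) t a <= u0 0 v0 (Some b) t (sigma0_prop1 t v0).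
Proof.
move=> t0 v00 b0 min_le_b; rewrite u0_sigma0_prop1 //.
apply: le_trans (u0_le_max v0 a t0 b0) _.
rewrite !ge_max le_max lexx /= le_max lexx orbT /= le_max.
by move: min_le_b; rewrite ge_min => /orP[] ?; apply/orP; [right|left]; lra.
Qed.

Lemma sigma0_prop1_bid_rule (v0 : R) b t : 0 <= v0 -> 0 <= b -> Num.min t v0 <= b ->
  let a := sigma0_prop1 t v0 in
  if wins0 0 (Some b) t (Action0 (offer a) (Some v0)) then bid0 a = Some v0
  else bid0 a = None \/ bid0 a = Some 0.
Proof.
move=> v00 b0 min_le_b /=; rewrite /sigma0_prop1; case: (leP t v0) => [tv0|v0t] /=.
  by rewrite /wins0 /incl1 /= lexx /= v00.
have v0b : v0 <= b by move: min_le_b; rewrite (min_r (ltW v0t)).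
by rewrite /wins0 /incl1 /= v0b b0; left.
Qed.

Definition unbribed_payoff1 (v1 : R) (b : option R) t : R :=
  if b is Some b1 then (if 0 <= b1 then v1 else 0) - t else 0.

Lemma u1_sigma0_prop1 (v1 : R) (b : option R) t x : u1 0 v1 b t (sigma0_prop1 t x) =
  if x < t then unbribed_payoff1 v1 b t else 0.
Proof.
rewrite /sigma0_prop1 /u1 /incl1 /excluded1 /auction /unbribed_payoff1.
by case: b => [b1|]; case_ifs; lra.
Qed.

Lemma EU1_sigma0_prop1 (f0 : R -> R) (v1 : R) (b : option R) t :
  EU1 0 f0 (@sigma0_prop1 R) v1 b t =
  (\int[@lebesgue_measure R]_(x in `[0%R, 1%R])
     ((if x < t then unbribed_payoff1 v1 b t else 0) * f0 x)%:E)%E.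
Proof. by apply: eq_integral => x _; rewrite u1_sigma0_prop1. Qed.

(* The type whose first-order condition yields the tip t, clamped into [0, 1]
   off path. *)
Definition belief (F0 f0 : R -> R) t : R :=
  Num.max 0 (Num.min 1 (t + F0 t / f0 t)).

Lemma belief_itv (F0 f0 : R -> R) t : 0 <= belief F0 f0 t <= 1.
Proof. by rewrite le_max lexx ge_max ler01 ge_min lexx. Qed.

Lemma min_le_belief (F0 f0 : R -> R) t (v0 : R) : 0 <= F0 t / f0 t -> v0 <= 1 ->
  Num.min t v0 <= belief F0 f0 t.
Proof.
move=> G0 v01; rewrite le_max le_min orbC; apply/orP; left; apply/andP; split.
  by rewrite ge_min v01 orbT.
by rewrite ge_min; apply/orP; left; lra.
Qed.

Lemma belief_id (F0 f0 : R -> R) t : 0 <= t + F0 t / f0 t <= 1 ->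
  belief F0 f0 t = t + F0 t / f0 t.
Proof. by case/andP=> ge0 le1; rewrite /belief (min_r le1) (max_r ge0). Qed.

End Play.

Section Proposition1.
Variables (R : realType) (F0 f0 tau : R -> R).
Hypothesis mf0 : measurable_fun setT f0.
Hypothesis f0_ge0 : forall x, 0 <= f0 x.
Hypothesis F0_def :
  forall x, ((F0 x)%:E = \int[@lebesgue_measure R]_(y in `]-oo, x]) (f0 y)%:E)%E.
Hypothesis F0_0 : F0 0 = 0.
Hypothesis f0_gt0 : forall x, 0 < x <= 1 -> 0 < f0 x.
Hypothesis hazard_mono :
  forall x y, 0 <= x -> x <= y -> y <= 1 -> F0 x / f0 x <= F0 y / f0 y.
Hypothesis tau_foc : forall v, 0 <= v <= 1 ->
  0 <= tau v <= 1 /\ (v - tau v) - F0 (tau v) / f0 (tau v) = 0.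

Lemma belief_tau v : 0 <= v <= 1 -> belief F0 f0 (tau v) = v.
Proof.
move=> v01; have [_ foc] := tau_foc v01.
by rewrite belief_id (_ : tau v + _ = v) //; lra.
Qed.

Lemma bidder1_optimal v1 b t : 0 <= v1 <= 1 -> 0 <= t ->
  (EU1 0 f0 (@sigma0_prop1 R) v1 b t <=
   EU1 0 f0 (@sigma0_prop1 R) v1 (Some v1) (tau v1))%E.
Proof.
move=> v1_01 t0; have [tau_01 foc] := tau_foc v1_01.
have {}foc : v1 - tau v1 = F0 (tau v1) / f0 (tau v1) by lra.
have gain_ge0 : 0 <= v1 - tau v1 by rewrite foc (hazard_ge0 f0_ge0 F0_def).
have truthful : unbribed_payoff1 v1 (Some v1) (tau v1) = v1 - tau v1.
  by rewrite /unbribed_payoff1; case/andP: v1_01 => ->.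
have step := integral_step_density f0_ge0 mf0 F0_def F0_0.
rewrite !EU1_sigma0_prop1 truthful (step (tau v1) (v1 - tau v1)) //.
have [gain_le0|[-> t_lt_v1]] : unbribed_payoff1 v1 b t <= 0 \/
    unbribed_payoff1 v1 b t = v1 - t /\ t < v1.
  rewrite /unbribed_payoff1; case: b => [b1|]; last by left.
  case: ifP => _; last by left; lra.
  by have [|] := leP (v1 - t) 0; [left | right; split => //; lra].
- apply: le_trans (integral_le0_density f0_ge0 _ _) _.
    by move=> x; case: ifP.
  by rewrite lee_fin mulr_ge0 ?(cdf_ge0 f0_ge0 F0_def).
- rewrite step ?lee_fin; last 2 first.
  + by apply/andP; split; lra.
  + lra.
  by apply: (foc_argmax f0_ge0 mf0 F0_def f0_gt0 hazard_mono) => //; apply/andP; split; lra.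
Qed.

End Proposition1.

Theorem proposition1 (R : realType) (F0 f0 F f : R -> R) (tau : R -> R) :
  cdf_with_density F0 f0 ->
  cdf_with_density F f ->
  (forall x, 0 < x <= 1 -> 0 < f0 x) ->
  (forall x y, 0 <= x -> x <= y -> y <= 1 -> F0 x / f0 x <= F0 y / f0 y) ->
  (forall v, 0 <= v <= 1 ->
     0 <= tau v <= 1 /\ (v - tau v) - F0 (tau v) / f0 (tau v) = 0) ->
  equilibrium 0 f0 tau (@sigma0_prop1 R) /\
  (forall t v0, 0 <= t -> t <= v0 ->
     offer (@sigma0_prop1 R t v0) = Some (true, t) /\
     excluded1 t (offer (@sigma0_prop1 R t v0)) = true /\ bid0 (@sigma0_prop1 R t v0) = Some v0) /\
  (forall t v0, v0 < t ->
     offer (@sigma0_prop1 R t v0) = None /\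
     excluded1 t (offer (@sigma0_prop1 R t v0)) = false /\ bid0 (@sigma0_prop1 R t v0) = None).
Proof.
move=> [mf0 [f0_ge0 [F0_def [F0_0 _]]]] _ f0_gt0 hazard_mono tau_foc.
have min_le_b t v0 : 0 <= v0 <= 1 -> Num.min t v0 <= belief F0 f0 t.
  by case/andP=> _ v01; apply: min_le_belief; rewrite ?(hazard_ge0 f0_ge0 F0_def).
split; last first.
  split=> t v0; rewrite /sigma0_prop1; last by move=> v0t; rewrite leNgt v0t.
  by move=> _ tv0; rewrite tv0 /= lexx.
split; first by move=> v /tau_foc[/andP[]].
exists (belief F0 f0); split; first exact: belief_itv.
split; first exact: belief_tau.
split; [|split].
- move=> t v0 _ v0_01; have /andP[b0 _] := belief_itv F0 f0 t.
  by apply: sigma0_prop1_bid_rule; [case/andP: v0_01 | | exact: min_le_b].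
- move=> t v0 t0 v0_01 a; have /andP[b0 _] := belief_itv F0 f0 t.
  by apply: sigma0_prop1_best_response; [| case/andP: v0_01 | | exact: min_le_b].
- by move=> v1 v1_01 b t t0; apply: bidder1_optimal.
Qed.
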